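(* Let $f(x)=\frac1n\sum_{i=1}^nf_i(x)$ on $\mathbb{R}$ with $f_i(x)=\frac{a_i}2(x-x_i^* )^2$, $a_i>0$, $x_i^*\in\mathbb{R}$. Consider SGD $x^{k+1}=x^k-\gamma_kf_{i_k}'(x^k)$, where $i_k$ is sampled uniformly from $[n]$ independently at each iteration, with stepsize $\gamma_k=\frac{f_{i_k}(x^k)-f_{i_k}^*}{c_k|f_{i_k}'(x^k)|^2}$ (where $f_i^*=\inf f_i=0$) and $c_k=(k+1)/2$. Then $\mathbb{E}|x^{k+1}-\tilde x|^2=\mathcal O(1/k)$, where $\tilde x=\frac1n\sum_{i=1}^nx_i^*$; in general $\tilde x$ differs from the minimizer $x^*=\frac{\sum_{i=1}^na_ix_i^*}{\sum_{i=1}^na_i}$ of $f$.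
   Context: When $f'_{i_k}(x^k)=0$ the iterate is not updated. *)

From mathcomp Require Import all_boot all_order all_algebra.
Set Implicit Arguments. Unset Strict Implicit. Unset Printing Implicit Defensive.
Import Order.TTheory GRing.Theory Num.Theory.
Local Open Scope ring_scope.

Section SGD.
Variables (R : realFieldType) (n : nat) (a xs : 'I_n -> R).

Definition fi (i : 'I_n) (x : R) : R := a i / 2 * (x - xs i) ^+ 2.
Definition dfi (i : 'I_n) (x : R) : R := a i * (x - xs i).
Definition fistar (i : 'I_n) : R := 0.
Definition favg (x : R) : R := n%:R^-1 * \sum_(i < n) fi i x.
Definition xtilde : R := n%:R^-1 * \sum_(i < n) xs i.
Definition ck (k : nat) : R := k.+1%:R / 2.
Definition gammak (k : nat) (i : 'I_n) (x : R) : R :=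
  (fi i x - fistar i) / (ck k * `|dfi i x| ^+ 2).
Definition sgd_step (k : nat) (i : 'I_n) (x : R) : R :=
  if dfi i x == 0 then x else x - gammak k i x * dfi i x.

Fixpoint sgd_run (k : nat) (x : R) (s : seq 'I_n) : R :=
  match s with
  | [::] => x
  | i :: s' => sgd_run k.+1 (sgd_step k i x) s'
  end.

(* E |x^{k+1} - xtilde|^2, where i_0,...,i_k are i.i.d. uniform on [n]:
   average over all (k+1)-tuples of indices. *)
Definition sgd_msd (x0 : R) (k : nat) : R :=
  (n%:R ^+ k.+1)^-1 *
  \sum_(t : (k.+1).-tuple 'I_n) `|sgd_run 0 x0 t - xtilde| ^+ 2.

End SGD.

(** With the stepsize gamma_k and c_k = (k+1)/2, one SGD step maps x^k to
    (k x^k + x_{i_k}^* )/(k+1), whatever a_{i_k} > 0 is: SGD computes the running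
    average of the sampled points x_{i_0}^*, ..., x_{i_k}^*, forgetting x^0.  Hence
    x^{k+1} - x~ is the empirical mean of k+1 i.i.d. centred samples, whose mean
    square is sigma^2/(k+1), sigma^2 being the variance of the x_i^*.  The minimiser
    of f, in contrast, is the a-weighted mean of the x_i^*. *)
From mathcomp Require Import all_boot all_order all_algebra.
From mathcomp Require Import ring lra.
Set Implicit Arguments. Unset Strict Implicit. Unset Printing Implicit Defensive.
Import Order.TTheory GRing.Theory Num.Theory.
Local Open Scope ring_scope.

Lemma sum_sqr_centered (R : comPzRingType) (I : finType) (w z : I -> R) (u : R) :
  \sum_i w i * z i = 0 ->
  \sum_i w i * (u + z i) ^+ 2 = (\sum_i w i) * u ^+ 2 + \sum_i w i * z i ^+ 2.
Proof.
move=> wz0.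
have expand i :
    w i * (u + z i) ^+ 2 = w i * u ^+ 2 + (u *+ 2) * (w i * z i) + w i * z i ^+ 2.
  by ring.
rewrite (eq_bigr _ (fun i _ => expand i)) !big_split /=.
by rewrite -mulr_sumr wz0 mulr0 addr0 mulr_suml.
Qed.

Lemma big_tuple_rcons (V : nmodType) (T : finType) m (F : m.+1.-tuple T -> V) :
  \sum_(t : m.+1.-tuple T) F t = \sum_(t : m.-tuple T) \sum_(i : T) F [tuple of rcons t i].
Proof.
rewrite pair_big /=.
pose snoc (p : m.-tuple T * T) := [tuple of rcons p.1 p.2].
pose unsnoc (t : m.+1.-tuple T) :=
  ([tuple of belast (thead t) (behead_tuple t)], last (thead t) (behead t)).
rewrite (reindex snoc) //; exists unsnoc => [[t i] _ | t _].
  have e : rcons t i = rcons (belast (thead (snoc (t, i))) (behead (snoc (t, i))))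
                            (last (thead (snoc (t, i))) (behead (snoc (t, i)))).
    by rewrite -lastI; exact: (congr1 val (tuple_eta (snoc (t, i)))).
  by case: (rcons_inj e) => et ei; congr (_, _) => //; apply: val_inj.
by apply: val_inj; case/tupleP: t => x t /=; rewrite -lastI.
Qed.

Section PolyakSGD.
Variables (R : realFieldType) (n : nat) (a xs : 'I_n -> R).

Lemma sgd_run_rcons k x s i :
  sgd_run a xs k x (rcons s i) = sgd_step a xs (k + size s) i (sgd_run a xs k x s).
Proof. by elim: s k x => [|j s IH] k x /=; rewrite ?addn0 // IH addSnnS. Qed.

Lemma sgd_step_running_average k i x : a i != 0 ->
  sgd_step a xs k i x = (k%:R * x + xs i) / k.+1%:R.
Proof.
move=> ai0; have k1 : k.+1%:R != 0 :> R by rewrite pnatr_eq0.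
rewrite /sgd_step /gammak /dfi /fi /fistar /ck mulf_eq0 (negbTE ai0) subr_eq0 /=.
have [-> | xi] := eqVneq x (xs i).
  by rewrite -[X in _ + X]mul1r -mulrDl natr1 mulrC mulKf.
rewrite real_normK ?num_real //; field.
by rewrite subr_eq0 xi ai0 addrC natr1 k1.
Qed.

Definition wmean : R := (\sum_i a i * xs i) / \sum_i a i.

Lemma favg_wmean_shift y : \sum_i a i != 0 ->
  favg a xs y = favg a xs wmean + n%:R^-1 * ((\sum_i a i) / 2 * (y - wmean) ^+ 2).
Proof.
move=> suma0.
have centred : \sum_i a i / 2 * (wmean - xs i) = 0.
  under eq_bigr => i _ do rewrite mulrAC mulrBr.
  by rewrite -mulr_suml sumrB -mulr_suml /wmean mulrCA mulfV // mulr1 subrr mul0r.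
rewrite /favg /fi -mulrDr; congr (_ * _).
under eq_bigr => i _ do rewrite -(subrKA wmean).
by rewrite sum_sqr_centered // -mulr_suml addrC.
Qed.

Lemma favg_wmean_min y : 0 < \sum_i a i -> favg a xs wmean <= favg a xs y.
Proof.
move=> suma_gt0; rewrite (favg_wmean_shift y (lt0r_neq0 suma_gt0)) lerDl.
rewrite mulr_ge0 ?invr_ge0 ?ler0n // mulr_ge0 ?sqr_ge0 //.
by rewrite divr_ge0 ?ltW.
Qed.

Definition xvar : R := n%:R^-1 * \sum_(i < n) (xs i - xtilde xs) ^+ 2.

Lemma xvar_ge0 : 0 <= xvar.
Proof. by rewrite mulr_ge0 ?invr_ge0 ?ler0n ?sumr_ge0 // => i _; apply: sqr_ge0. Qed.

Hypothesis n_gt0 : (0 < n)%N.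

Lemma sum_sub_xtilde : \sum_(i < n) (xs i - xtilde xs) = 0.
Proof.
rewrite sumrB sumr_const card_ord /xtilde -mulrnAl -mulr_natl mulfV ?mul1r ?subrr //.
by rewrite pnatr_eq0 -lt0n.
Qed.

Hypothesis a_neq0 : forall i, a i != 0.
Variable x0 : R.

Definition sqdev_sum m : R :=
  \sum_(t : m.-tuple 'I_n) (sgd_run a xs 0 x0 t - xtilde xs) ^+ 2.

Lemma sqdev_sumS m : sqdev_sum m.+1 =
  n%:R * (m%:R / m.+1%:R) ^+ 2 * sqdev_sum m + n%:R ^+ m.+1 * xvar / m.+1%:R ^+ 2.
Proof.
have k1 : m.+1%:R != 0 :> R by rewrite pnatr_eq0.
have n0 : n%:R != 0 :> R by rewrite pnatr_eq0 -lt0n.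
pose v : R := m.+1%:R^-1.
have step_dev (t : m.-tuple 'I_n) i :
    sgd_run a xs 0 x0 [tuple of rcons t i] - xtilde xs =
    m%:R * v * (sgd_run a xs 0 x0 t - xtilde xs) + v * (xs i - xtilde xs).
  rewrite /= sgd_run_rcons size_tuple sgd_step_running_average // /v.
  by field; rewrite addrC natr1.
have inner (t : m.-tuple 'I_n) :
    \sum_i (sgd_run a xs 0 x0 [tuple of rcons t i] - xtilde xs) ^+ 2 =
    n%:R * (m%:R * v * (sgd_run a xs 0 x0 t - xtilde xs)) ^+ 2 + v ^+ 2 * (n%:R * xvar).
  under eq_bigr => i _ do rewrite step_dev -[_ ^+ 2]mul1r.
  rewrite sum_sqr_centered; last by rewrite -mulr_sumr -mulr_sumr sum_sub_xtilde !mulr0.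
  rewrite sumr_const card_ord /xvar mulVKf // mulr_sumr; congr (_ + _).
  by apply: eq_bigr => i _; ring.
rewrite /sqdev_sum (big_tuple_rcons (V := R)) (eq_bigr _ (fun t _ => inner t)).
rewrite big_split /= sumr_const card_tuple card_ord -[_ *+ (n ^ m)]mulr_natr natrX.
under eq_bigr => t _ do rewrite exprMn mulrA.
by rewrite -mulr_sumr [n%:R ^+ m.+1]exprS /v exprVn; ring.
Qed.

Lemma sqdev_sum_closed m : sqdev_sum m.+1 = n%:R ^+ m.+1 * xvar / m.+1%:R.
Proof.
elim: m => [|m IH]; first by rewrite sqdev_sumS; field.
rewrite sqdev_sumS IH [n%:R ^+ m.+2]exprS; field.
by have m_ge0 := ler0n R m; apply/andP; split; apply: lt0r_neq0; lra.
Qed.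

Lemma sgd_msd_closed k : sgd_msd a xs x0 k = xvar / k.+1%:R.
Proof.
have n0 : n%:R ^+ k.+1 != 0 :> R by rewrite expf_neq0 // pnatr_eq0 -lt0n.
rewrite /sgd_msd.
under eq_bigr => t _ do rewrite real_normK ?num_real //.
by rewrite -/(sqdev_sum _) sqdev_sum_closed -mulrA mulKf.
Qed.

End PolyakSGD.

Lemma wmean_neq_xtilde (R : realFieldType) :
  wmean (fun i : 'I_2 => i.+1%:R) (fun i => i%:R) != xtilde (fun i : 'I_2 => i%:R) :> R.
Proof.
rewrite /wmean /xtilde !big_ord_recr !big_ord0 /=.
by rewrite -subr_eq0 (_ : _ - _ = 6^-1) ?invr_eq0 ?pnatr_eq0 //; field.
Qed.

Theorem proposition4 (R : realFieldType) :
  (forall (n : nat) (a xs : 'I_n -> R) (x0 : R),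
     (0 < n)%N -> (forall i, 0 < a i) ->
     exists C : R, forall k : nat, (0 < k)%N ->
       sgd_msd a xs x0 k <= C / k%:R)
  /\
  (exists (n : nat) (a xs : 'I_n -> R),
     (forall i, 0 < a i) /\
     exists xmin : R, (forall y, favg a xs xmin <= favg a xs y) /\
                      xmin <> xtilde xs).
Proof.
split=> [n a xs x0 n_gt0 a_gt0 | ].
  exists (xvar xs) => k k_gt0.
  have a_neq0 i : a i != 0 by rewrite lt0r_neq0.
  rewrite (sgd_msd_closed xs n_gt0 a_neq0) ler_wpM2l ?xvar_ge0 //.
  by rewrite lef_pV2 ?posrE ?ltr0n // ler_nat.
exists 2%N, (fun i => i.+1%:R), (fun i => i%:R); split=> [i | ]; first by rewrite ltr0n.
exists (wmean (fun i : 'I_2 => i.+1%:R) (fun i => i%:R)).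
split=> [y | ]; last exact/eqP/wmean_neq_xtilde.
apply: favg_wmean_min.
by rewrite !big_ord_recr big_ord0 /=; lra.
Qed.
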